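(* Let $(f,g)$ be a Ribaucour pair of $(\mathfrak{m}^1,\mathfrak{m}^2)$-type such that the cross-ratios of all its quadrilaterals $(f_i,f_j,g_j,g_i)$ are equal. Let $\lambda\in\mathbb{R}$ and let $\sigma_n$ be the inversion in $\mathfrak{n}:=\mathfrak{m}^1+\lambda\mathfrak{m}^2+\langle\mathfrak{m}^1+\lambda\mathfrak{m}^2,\mathfrak{p}\rangle\mathfrak{p}$. Then the cross-ratios of all quadrilaterals of the Ribaucour pair $(f,\sigma_n(g))$ are again equal.
   Context: Light cone model: $\mathbb{R}^{4,2}$ with form of signature $(4,2)$, light cone $\mathcal{L}$, $\mathbb{P}(\mathcal{L})$; fixed $\mathfrak{p}$, $\langle\mathfrak{p},\mathfrak{p}\rangle=-1$; $v$ with $\langle\mathfrak{v},\mathfrak{p}\rangle=0$ are points of $\mathbb{R}^3\cup\{\infty\}$, others oriented spheres; incidence = orthogonality. Inversion in $\mathfrak{a}$ ($\langle\mathfrak{a},\mathfrak{a}\rangle\ne0$): $\sigma_a(x)=x-\frac{2\langle x,\mathfrak{a}\rangle}{\langle\mathfrak{a},\mathfrak{a}\rangle}\mathfrak{a}$; M-inversion if $\mathfrak{a}\perp\mathfrak{p}$. Discrete curves map consecutive integers to points. A Ribaucour pair $(f,g)$: $f_i,f_j,g_j,g_i$ concircular for each edge $(ij)$; choosing representatives with $\mathfrak{f}_i-\mathfrak{f}_j+\mathfrak{g}_j-\mathfrak{g}_i=0$, the R-evolution map consists of the M-inversions in $\mathfrak{r}_{ij}=\mathfrak{f}_i-\mathfrak{f}_j=\mathfrak{g}_i-\mathfrak{g}_j$.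 The pair is of $(\mathfrak{m}^1,\mathfrak{m}^2)$-type if $\mathrm{span}\{\mathfrak{m}^1,\mathfrak{m}^2,\mathfrak{p}\}$ is 3-dimensional and all its elements are fixed by all inversions of the R-evolution map. (By an earlier result, $(f,\sigma_n(g))$ is again a Ribaucour pair with the same R-evolution map.) Cross-ratio means the (real) cross-ratio of four concircular points with a fixed standard convention. *)

(* Light cone model of Lie sphere geometry in R^{4,2}. *)
From HB Require Import structures.
From mathcomp Require Import all_boot all_order all_algebra.
Set Implicit Arguments. Unset Strict Implicit. Unset Printing Implicit Defensive.
Import Order.TTheory GRing.Theory Num.Theory.
Local Open Scope ring_scope.

Section LieSphere.
Variable R : realFieldType.
Notation V := 'rV[R]_6.

Definition eta (k : 'I_6) : R := if (k < 4)%N then 1 else -1.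

Definition lie (x y : V) : R := \sum_(k < 6) eta k * x 0 k * y 0 k.

Definition sigma (a x : V) : V := x - ((2 * lie x a) / lie a a) *: a.

(* x represents a point of R^3 u {oo}: nonzero lightlike and orthogonal to p *)
Definition is_point (p x : V) : Prop := [/\ x != 0, lie x x = 0 & lie x p = 0].

(* x and y represent distinct points of P(L) *)
Definition distinct_pt (x y : V) : Prop := forall k : R, y != k *: x /\ x != k *: y.

(* four points lie on a common circle: they span at most a 3-dim subspace *)
Definition concircular (a b c d : V) : Prop :=
  (\rank (col_mx (col_mx a b) (col_mx c d)) <= 3)%N.

Definition nondeg_quad (a b c d : V) : Prop :=
  [/\ distinct_pt a b, distinct_pt a c, distinct_pt a d
    & [/\ distinct_pt b c, distinct_pt b d & distinct_pt c d]].

(* discrete curves are maps int -> V (representatives); the edges are (i, i+1) *)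
Definition ribaucour_pair (p : V) (f g : int -> V) : Prop :=
  (forall i, is_point p (f i) /\ is_point p (g i)) /\
  (forall i, concircular (f i) (f (i + 1)) (g (i + 1)) (g i) /\
             nondeg_quad (f i) (f (i + 1)) (g (i + 1)) (g i)).

(* r is (a representative of) r_ij = f_i - f_j = g_i - g_j for edge (i,i+1),
   computed from representatives chosen with f_i - f_j + g_j - g_i = 0 *)
Definition revol_vec (f g : int -> V) (i : int) (r : V) : Prop :=
  exists a b c d : R,
    [/\ [/\ a != 0, b != 0, c != 0 & d != 0],
        a *: f i - b *: f (i + 1) + c *: g (i + 1) - d *: g i = 0
      & r = a *: f i - b *: f (i + 1)].

(* (m1,m2)-type: span{m1,m2,p} is 3-dim and pointwise fixed by all
   inversions of the R-evolution map *)
Definition of_type (p : V) (f g : int -> V) (m1 m2 : V) : Prop :=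
  \rank (col_mx m1 (col_mx m2 p)) = 3%N /\
  forall i r, revol_vec f g i r ->
    forall al be ga : R,
      sigma r (al *: m1 + be *: m2 + ga *: p) = al *: m1 + be *: m2 + ga *: p.

(* If c1 x1 + c2 x2 + c3 x3 + c4 x4 = 0 is the (unique up to scale) linear
   relation, then cr = - c2 <x1,x2> / (c4 <x1,x4>); with the circle
   parametrised by t, this equals (t1-t2)(t3-t4)/((t2-t3)(t4-t1)). *)
Definition cross_ratio (x1 x2 x3 x4 : V) (q : R) : Prop :=
  exists c1 c2 c3 c4 : R,
    [/\ c1 *: x1 + c2 *: x2 + c3 *: x3 + c4 *: x4 = 0, c2 != 0, c4 != 0
      & q = - (c2 * lie x1 x2) / (c4 * lie x1 x4)].

Definition nvec (p m1 m2 : V) (lam : R) : V :=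
  (m1 + lam *: m2) + lie (m1 + lam *: m2) p *: p.

End LieSphere.

(* Every quadrilateral satisfies a linear relation
   c1 f_i + c2 f_(i+1) + c3 g_(i+1) + c4 g_i = 0, and
   r = c1 f_i + c2 f_(i+1) = - (c3 g_(i+1) + c4 g_i) is the R-evolution vector
   of the edge.  As n lies in span{m1, m2, p}, the inversion in r fixes n, so
   <r, n> = 0.  Hence sigma_n(g_(i+1)), sigma_n(g_i) satisfy the same relation,
   and the cross-ratio only changes through <f_i, g_i>, which becomes
   <f_i, sigma_n(g_i)> = <f_i, g_i> (1 - 2 k_i / <n, n>) with
   k_i = <f_i, n> <g_i, n> / <f_i, g_i>.  The relations <r, n> = 0 and
   c1 c4 <f_i, g_i> = c2 c3 <f_(i+1), g_(i+1)> (valid for any linear relation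
   between four null vectors) give k_(i+1) = k_i, so all cross-ratios change
   by the same factor.
   The products <x, y> of distinct points never vanish because p^perp has
   signature (4,1): a combination of x, y, p without timelike coordinates would
   have square -c^2 <= 0 although it lies in a positive definite subspace. *)

From Pilot Require Import Defs.
From HB Require Import structures.
From mathcomp Require Import all_boot all_order all_algebra ring lra.
Import Order.TTheory GRing.Theory Num.Theory.
Local Open Scope ring_scope.
Set Implicit Arguments. Unset Strict Implicit.

Lemma rV_dependent3 (F : fieldType) n (u v w : 'rV[F]_n) : (n < 3)%N ->
  exists a b c : F, [|| a != 0, b != 0 | c != 0] /\ a *: u + b *: v + c *: w = 0.
Proof.
move=> n_lt3; pose A := col_mx u (col_mx v w).
have : kermx A != 0.
  rewrite kermx_eq0 /row_free; apply: contraTN n_lt3 => /eqP rkA.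
  by rewrite -leqNgt -[3%N]/(1 + (1 + 1))%N -rkA rank_leq_col.
case/rowV0Pn => k /sub_kermxP kA k_neq0.
exists (lsubmx k 0 0), (lsubmx (rsubmx k) 0 0), (rsubmx (rsubmx k) 0 0); split.
  apply: contraR k_neq0; rewrite !negb_or !negbK !mxE.
  move=> /and3P[/eqP k0 /eqP k1 /eqP k2]; apply/eqP/rowP => j; rewrite mxE.
  case: (split_ordP j) => [j' ->|j' ->]; first by rewrite ord1.
  by case: (split_ordP j') => [j'' ->|j'' ->]; rewrite ord1.
rewrite -[k]hsubmxK -[rsubmx k]hsubmxK /A !mul_row_col in kA.
rewrite [lsubmx k]mx11_scalar [lsubmx (rsubmx k)]mx11_scalar in kA.
by rewrite [rsubmx (rsubmx k)]mx11_scalar !mul_scalar_mx addrA in kA.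
Qed.

Lemma int_shift_const T (h : int -> T) :
  (forall i, h (i + 1) = h i) -> forall i, h i = h 0.
Proof.
move=> hS; elim/int_rec => // m IH; first by rewrite -IH intS addrC hS.
by rewrite -IH -hS intS opprD addrAC addNr add0r.
Qed.

Section LieForm.
Variable R : realFieldType.
Implicit Types (x y z w : 'rV[R]_6) (a b : R).

Lemma lieC x y : lie x y = lie y x.
Proof. by apply: eq_bigr => k _; rewrite mulrAC. Qed.

Lemma lieDl x y z : lie (x + y) z = lie x z + lie y z.
Proof. by rewrite -big_split; apply: eq_bigr => k _ /=; rewrite mxE; ring. Qed.

Lemma lieZl a x z : lie (a *: x) z = a * lie x z.
Proof. by rewrite mulr_sumr; apply: eq_bigr => k _ /=; rewrite mxE; ring. Qed.

Lemma lieNl x z : lie (- x) z = - lie x z.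
Proof. by rewrite -scaleN1r lieZl mulN1r. Qed.

Lemma lie0l z : lie 0 z = 0.
Proof. by rewrite -(scale0r 0) lieZl mul0r. Qed.

Lemma lieDr x y z : lie z (x + y) = lie z x + lie z y.
Proof. by rewrite lieC lieDl !(lieC z). Qed.

Lemma lieZr a x z : lie z (a *: x) = a * lie z x.
Proof. by rewrite lieC lieZl lieC. Qed.

Lemma lieNr x z : lie z (- x) = - lie z x.
Proof. by rewrite lieC lieNl lieC. Qed.

Lemma lieBr x y z : lie z (x - y) = lie z x - lie z y.
Proof. by rewrite lieDr lieNr. Qed.

Lemma lie0r z : lie z 0 = 0.
Proof. by rewrite lieC lie0l. Qed.

Definition lieE := (lieDl, lieZl, lieNl, lie0l, lieDr, lieZr, lieNr, lieBr, lie0r).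

Lemma lie_split x y : lie x y =
  \sum_(k < 4) x 0 (lshift 2 k) * y 0 (lshift 2 k)
  - \sum_(j < 2) x 0 (rshift 4 j) * y 0 (rshift 4 j).
Proof.
rewrite /lie (@big_split_ord _ _ _ 4 2) /= -sumrN.
by congr (_ + _); apply: eq_bigr => k _; rewrite /Defs.eta /= ?ltn_ord; ring.
Qed.

Lemma lie_null_comb a b x y : lie x x = 0 -> lie y y = 0 ->
  lie (a *: x + b *: y) (a *: x + b *: y) = 2 * a * b * lie x y.
Proof. by move=> xx yy; rewrite !lieE xx yy (lieC y x); ring. Qed.

End LieForm.

Section Signature.
Variable R : realFieldType.
Implicit Types (x y w p : 'rV[R]_6).

Lemma lie_posdef w : (forall j : 'I_2, w 0 (rshift 4 j) = 0) ->
  0 <= lie w w /\ (lie w w = 0 -> w = 0).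
Proof.
move=> w_neg0; have -> : lie w w = \sum_(k < 4) w 0 (lshift 2 k) ^+ 2.
  rewrite lie_split [X in _ - X]big1 ?subr0 => [|j _]; last by rewrite w_neg0 mulr0.
  by apply: eq_bigr => k _; rewrite expr2.
split=> [|/eqP]; first by apply: sumr_ge0 => k _; rewrite sqr_ge0.
rewrite psumr_eq0 => [/allP w_pos0|k _]; last exact: sqr_ge0.
apply/rowP => k; rewrite mxE; change 'I_6 with 'I_(4 + 2) in k.
case: (split_ordP k) => j ->; last exact: w_neg0.
by apply/eqP; rewrite -sqrf_eq0; apply: w_pos0; rewrite mem_index_enum.
Qed.

Lemma distinct_ptC x y : distinct_pt x y -> distinct_pt y x.
Proof. by move=> xy k; have [] := xy k. Qed.

Lemma lie_point_neq0 p x y : lie p p = -1 ->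
  is_point p x -> is_point p y -> distinct_pt x y -> lie x y != 0.
Proof.
move=> pp [_ xx xp] [_ yy yp] xy; apply/eqP => xy0.
pose neg_part w := \row_(j < 2) w 0 (rshift 4 j).
have [a [b [c [abc0 rel]]]] :=
  rV_dependent3 (neg_part x) (neg_part y) (neg_part p) (ltnSn 2).
pose w := a *: x + b *: y + c *: p.
have [w_ge0 w_eq0] : 0 <= lie w w /\ (lie w w = 0 -> w = 0).
  apply: lie_posdef => j; have := congr1 (fun u : 'rV[R]_2 => u 0 j) rel.
  by rewrite !mxE.
have ww : lie w w = - c ^+ 2.
  by rewrite !lieE (lieC y x) (lieC p x) (lieC p y) xx yy pp xp yp xy0; ring.
have c0 : c = 0 by apply/eqP; rewrite -sqrf_eq0 eq_le sqr_ge0 andbT -oppr_ge0 -ww.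
have : w = 0 by apply: w_eq0; rewrite ww c0; ring.
rewrite /w c0 scale0r addr0 => /eqP; rewrite addr_eq0 -scaleNr => /eqP ab.
have [b0|b_neq0] := eqVneq b 0.
  move: abc0 ab; rewrite b0 c0 eqxx /= !orbF oppr0 scale0r => a_neq0 /eqP.
  rewrite scaler_eq0 (negPf a_neq0) /=.
  by have [_] := xy 0; rewrite scale0r => /negPf ->.
by case: (xy ((- b)^-1 * a)); rewrite -scalerA ab scalerA mulVf ?oppr_eq0 // scale1r eqxx.
Qed.
End Signature.

Section Inversion.
Variable R : realFieldType.
Implicit Types (a r x y : 'rV[R]_6) (c : R).

Lemma sigmaD a x y : sigma a (x + y) = sigma a x + sigma a y.
Proof. by rewrite /sigma lieDl mulrDr mulrDl scalerDl opprD addrACA. Qed.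

Lemma sigmaZ a c x : sigma a (c *: x) = c *: sigma a x.
Proof. by rewrite /sigma lieZl scalerBr scalerA; congr (_ - _ *: _); ring. Qed.

Lemma sigma_id a x : lie x a = 0 -> sigma a x = x.
Proof. by move=> xa; rewrite /sigma xa mulr0 mul0r scale0r subr0. Qed.

Lemma lie_sigmar a x y :
  lie x (sigma a y) = lie x y - 2 * lie y a / lie a a * lie x a.
Proof. by rewrite /sigma lieBr lieZr. Qed.

Lemma sigma_fixed_lie r x : lie r r != 0 -> sigma r x = x -> lie x r = 0.
Proof.
move=> rr /eqP; rewrite /sigma subr_eq addrC -subr_eq subrr eq_sym scaler_eq0.
case/orP => [|/eqP r0]; last by rewrite r0 lie0l eqxx in rr.
by rewrite !mulf_eq0 invr_eq0 (negPf rr) pnatr_eq0 orbF => /eqP.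
Qed.

End Inversion.

Section NullRelations.
Variable R : realFieldType.
Implicit Types (u v w : 'rV[R]_6) (a b c : R).

Lemma null_relation_not_distinct u v w a b c :
  lie u u = 0 -> lie v v = 0 -> lie w w = 0 -> lie v w != 0 ->
  a != 0 -> c != 0 -> a *: u + b *: v + c *: w = 0 -> ~ distinct_pt u w.
Proof.
move=> uu vv ww vw a0 c0 rel.
have bvcw : b *: v + c *: w = (- a) *: u.
  by apply/eqP; rewrite scaleNr -addr_eq0 addrC addrA rel.
have /eqP : 2 * b * c * lie v w = 0.
  by rewrite -lie_null_comb // bvcw lieZl lieZr uu !mulr0.
rewrite !mulf_eq0 pnatr_eq0 (negPf c0) (negPf vw) /= !orbF => /eqP b0.
move: bvcw; rewrite b0 scale0r add0r => cw /(_ (c^-1 * - a)) [+ _].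
by rewrite -scalerA -cw scalerA mulVf // scale1r eqxx.
Qed.

Lemma null_quad_lie (x1 x2 x3 x4 : 'rV[R]_6) (c1 c2 c3 c4 : R) :
  lie x1 x1 = 0 -> lie x2 x2 = 0 -> lie x3 x3 = 0 -> lie x4 x4 = 0 ->
  c1 *: x1 + c2 *: x2 + c3 *: x3 + c4 *: x4 = 0 ->
  c1 * c4 * lie x1 x4 = c2 * c3 * lie x2 x3.
Proof.
move=> n1 n2 n3 n4 rel.
have r_eq : c1 *: x1 + c2 *: x2 = - (c3 *: x3 + c4 *: x4).
  by apply/eqP; rewrite -addr_eq0 addrA rel.
have rr : 2 * c1 * c2 * lie x1 x2 = 2 * c3 * c4 * lie x3 x4.
  by rewrite -!lie_null_comb // r_eq lieNl lieNr opprK.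
have e1 : c2 * lie x1 x2 + c3 * lie x1 x3 + c4 * lie x1 x4 = 0.
  by rewrite -(lie0r x1) -rel !lieE n1; ring.
have e3 : c1 * lie x1 x3 + c2 * lie x2 x3 + c4 * lie x3 x4 = 0.
  by rewrite -(lie0r x3) -rel !lieE n3 (lieC x3 x1) (lieC x3 x2); ring.
move: (congr1 (fun t => c1 * t) e1) (congr1 (fun t => c3 * t) e3) => /= e1' e3'.
lra.
Qed.

End NullRelations.

Section RibaucourPair.
Variables (R : realFieldType) (p : 'rV[R]_6) (f g : int -> 'rV[R]_6).
Hypotheses (pp : lie p p = -1) (fg_rib : ribaucour_pair p f g).

Definition quad_rel i (c1 c2 c3 c4 : R) :=
  c1 *: f i + c2 *: f (i + 1) + c3 *: g (i + 1) + c4 *: g i = 0.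

Lemma null_f i : lie (f i) (f i) = 0.
Proof. by have [[[_ ->]]] := fg_rib.1 i. Qed.

Lemma null_g i : lie (g i) (g i) = 0.
Proof. by have [_ [_ ->]] := fg_rib.1 i. Qed.

Lemma lie_fg_neq0 i : lie (f i) (g i) != 0.
Proof.
have [fi gi] := fg_rib.1 i; have [_ [_ _ fg _]] := fg_rib.2 i.
exact: lie_point_neq0 pp fi gi fg.
Qed.

Lemma lie_f_succ_neq0 i : lie (f i) (f (i + 1)) != 0.
Proof.
have [[fi _] [fj _]] := (fg_rib.1 i, fg_rib.1 (i + 1)).
by have [_ [fifj _ _ _]] := fg_rib.2 i; apply: lie_point_neq0 pp fi fj fifj.
Qed.

Lemma lie_g_succ_neq0 i : lie (g (i + 1)) (g i) != 0.
Proof.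
have [[_ gi] [_ gj]] := (fg_rib.1 i, fg_rib.1 (i + 1)).
by have [_ [_ _ _ [_ _ gjgi]]] := fg_rib.2 i; apply: lie_point_neq0 pp gj gi gjgi.
Qed.

Lemma quad_rel_coef_neq0 i c1 c2 c3 c4 : quad_rel i c1 c2 c3 c4 ->
  c2 != 0 -> c4 != 0 -> c1 != 0 /\ c3 != 0.
Proof.
move=> rel c2_0 c4_0; have [_ [_ _ _ [_ fjgi _]]] := fg_rib.2 i.
split; apply/eqP => c0.
  apply: (null_relation_not_distinct (b := c3) (null_f _) (null_g _) (null_g _)
    (lie_g_succ_neq0 i) c2_0 c4_0 _ fjgi).
  by rewrite -[RHS]rel /quad_rel c0 scale0r add0r.
apply: (null_relation_not_distinct (b := c1) (null_g _) (null_f _) (null_f _)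
  (lie_f_succ_neq0 i) c4_0 c2_0 _ (distinct_ptC fjgi)).
by rewrite -[RHS]rel /quad_rel c0 scale0r addr0 [RHS]addrC addrA.
Qed.

Section FixedVector.
Variable n : 'rV[R]_6.
Hypothesis n_fixed : forall i r, revol_vec f g i r -> sigma r n = n.

Lemma quad_rel_lie_n i c1 c2 c3 c4 : quad_rel i c1 c2 c3 c4 -> c2 != 0 -> c4 != 0 ->
  c1 * lie (f i) n + c2 * lie (f (i + 1)) n = 0 /\
  c3 * lie (g (i + 1)) n + c4 * lie (g i) n = 0.
Proof.
move=> rel c2_0 c4_0; have [c1_0 c3_0] := quad_rel_coef_neq0 rel c2_0 c4_0.
pose r := c1 *: f i + c2 *: f (i + 1).
have r_revol : revol_vec f g i r.
  exists c1, (- c2), c3, (- c4); rewrite !scaleNr !opprK ?oppr_eq0.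
  by split => //; split.
have r_eq : r = - (c3 *: g (i + 1) + c4 *: g i).
  by apply/eqP; rewrite -addr_eq0 addrA rel.
have rr : lie r r != 0.
  by rewrite lie_null_comb ?null_f // !mulf_neq0 ?pnatr_eq0 ?lie_f_succ_neq0.
have nr := sigma_fixed_lie rr (n_fixed r_revol).
split; first by move: nr; rewrite lieC !lieE.
by move/eqP: nr; rewrite r_eq lieNr oppr_eq0 lieC !lieE => /eqP.
Qed.

Definition fg_invariant i := lie (f i) n * lie (g i) n / lie (f i) (g i).

Lemma fg_invariant_step i q : cross_ratio (f i) (f (i + 1)) (g (i + 1)) (g i) q ->
  fg_invariant (i + 1) = fg_invariant i.
Proof.
case=> c1 [c2 [c3 [c4 [rel c2_0 c4_0 _]]]].
have [c1_0 c3_0] := quad_rel_coef_neq0 rel c2_0 c4_0.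
have [eF eG] := quad_rel_lie_n rel c2_0 c4_0.
have eX := null_quad_lie (null_f i) (null_f (i + 1)) (null_g (i + 1)) (null_g i) rel.
have EF : lie (f i) n = - (c2 / c1) * lie (f (i + 1)) n.
  by apply: (mulfI c1_0); move/eqP: eF; rewrite addr_eq0 => /eqP ->; field.
have EG : lie (g i) n = - (c3 / c4) * lie (g (i + 1)) n.
  by apply: (mulfI c4_0); move/eqP: eG; rewrite addrC addr_eq0 => /eqP ->; field.
have EX : lie (f i) (g i) = c2 * c3 / (c1 * c4) * lie (f (i + 1)) (g (i + 1)).
  by apply: (mulfI (mulf_neq0 c1_0 c4_0)); rewrite eX; field; rewrite c4_0 c1_0.
rewrite /fg_invariant EF EG EX; field.
by rewrite lie_fg_neq0 c1_0 c2_0 c3_0 c4_0.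
Qed.

Lemma cross_ratio_sigma i q : lie n n != 0 ->
  cross_ratio (f i) (f (i + 1)) (g (i + 1)) (g i) q ->
  cross_ratio (f i) (f (i + 1)) (sigma n (g (i + 1))) (sigma n (g i))
    (q / (1 - 2 * fg_invariant i / lie n n)).
Proof.
move=> nn [c1 [c2 [c3 [c4 [rel c2_0 c4_0 ->]]]]].
have [_ eG] := quad_rel_lie_n rel c2_0 c4_0.
exists c1, c2, c3, c4; split => //.
  by rewrite -!sigmaZ -addrA -sigmaD sigma_id ?addrA // !lieE.
have -> : lie (f i) (sigma n (g i)) =
    lie (f i) (g i) * (1 - 2 * fg_invariant i / lie n n).
  by rewrite lie_sigmar /fg_invariant; field; rewrite nn lie_fg_neq0.
by rewrite [in RHS]mulrA [in RHS]invfM [in RHS]mulrA.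
Qed.

End FixedVector.

End RibaucourPair.

Theorem proposition3p2 (R : realFieldType) (p m1 m2 : 'rV[R]_6)
    (f g : int -> 'rV[R]_6) (lam : R) :
  lie p p = -1 ->
  ribaucour_pair p f g ->
  of_type p f g m1 m2 ->
  (exists q : R, forall i : int,
      cross_ratio (f i) (f (i + 1)) (g (i + 1)) (g i) q) ->
  lie (nvec p m1 m2 lam) (nvec p m1 m2 lam) != 0 ->
  (forall i : int, nondeg_quad (f i) (f (i + 1))
      (sigma (nvec p m1 m2 lam) (g (i + 1))) (sigma (nvec p m1 m2 lam) (g i))) ->
  exists q' : R, forall i : int,
    cross_ratio (f i) (f (i + 1))
      (sigma (nvec p m1 m2 lam) (g (i + 1))) (sigma (nvec p m1 m2 lam) (g i)) q'.
Proof.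
(* The new quadrilaterals inherit their linear relations from the old ones. *)
move=> pp fg_rib [_ span_fixed] [q cr] nn _.
set n := nvec p m1 m2 lam in nn *.
have n_fixed i r : revol_vec f g i r -> sigma r n = n.
  by move=> /span_fixed /(_ 1 lam (lie (m1 + lam *: m2) p)); rewrite scale1r.
have inv_const :=
  int_shift_const (fun i => fg_invariant_step pp fg_rib n_fixed (cr i)).
exists (q / (1 - 2 * fg_invariant f g n 0 / lie n n)) => i.
rewrite -(inv_const i); exact: (cross_ratio_sigma pp fg_rib n_fixed nn (cr i)).
Qed.
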